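(* Let $n\ge2$. Then $H_n\rtimes S_n$ is generated by at most $3$ elements.
   Context: $\mathbb{N}=\{1,2,\dots\}$, $X_n=\{1,\dots,n\}\times\mathbb{N}$. $H_n$ is the group of bijections $g$ of $X_n$ with $z_i(g)\in\mathbb{N}$, $t_i(g)\in\mathbb{Z}$ such that $(i,m)g=(i,m+t_i(g))$ for all $m\ge z_i(g)$ (right action). Each $\sigma\in S_n$ acts on $X_n$ by $(i,m)\sigma=(i\sigma,m)$, and $H_n\rtimes S_n$ is the subgroup of $\mathrm{Sym}(X_n)$ generated by $H_n$ and these permutations. *)

From mathcomp Require Import all_boot all_order all_algebra all_fingroup.
Set Implicit Arguments. Unset Strict Implicit. Unset Printing Implicit Defensive.

(* X_n = {1..n} x N, encoded 0-indexed: the pair (i, m) : 'I_n * nat stands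
   for the paper's point (i+1, m+1). *)
Definition X (n : nat) : Type := ('I_n * nat)%type.

Definition Sym (n : nat) (f : X n -> X n) : Prop := bijective f.

Definition is_subgroup (n : nat) (P : (X n -> X n) -> Prop) : Prop :=
  [/\ (forall f, P f -> Sym f),
      P id,
      (forall f g, P f -> P g -> P (f \o g)) &
      (forall f g, P f -> cancel f g -> cancel g f -> P g)].

Definition gen (n : nat) (S : (X n -> X n) -> Prop) (f : X n -> X n) : Prop :=
  forall P, is_subgroup P -> (forall s, S s -> P s) -> P f.

Definition in_H (n : nat) (g : X n -> X n) : Prop :=
  Sym g /\
  exists (z : 'I_n -> nat) (t : 'I_n -> int),
    forall (i : 'I_n) (m : nat), z i <= m ->
      (g (i, m)).1 = i /\ ((g (i, m)).2 : int) = (m%:Z + t i)%R.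

Definition perm_act (n : nat) (s : 'S_n) : X n -> X n :=
  fun x => (s x.1, x.2).

Definition HS (n : nat) : (X n -> X n) -> Prop :=
  gen (fun f => in_H f \/ exists s : 'S_n, f = perm_act s).

From mathcomp Require Import all_boot all_order all_algebra all_fingroup.
From mathcomp Require Import zify.
Set Implicit Arguments. Unset Strict Implicit. Unset Printing Implicit Defensive.
Import GRing.Theory.

(* The generators are the shift s_1 (ray 0 slides one step into ray 1), a
   transposition and an n-cycle of the rays (one and the same for n = 2) and, for
   n = 2 only, the transposition of the origins of rays 0 and 1.  Conjugating s_1
   by S_n gives the shift s_j towards every ray j; for n >= 3 the commutator of s_1
   and s_2 is a transposition of two points, and its conjugates yield all
   transpositions of X_n, hence all finitary permutations.  Composing g in H_n
   with powers of the s_j moves all its eventual translations onto ray 0; a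
   bijection cannot eventually translate a single ray, so the result is finitary. *)

Section Subgroup.
Variables (n : nat) (P : (X n -> X n) -> Prop).
Hypothesis subP : is_subgroup P.

Lemma subgroup1 : P id.
Proof. by case: subP. Qed.

Lemma subgroupM f g : P f -> P g -> P (f \o g).
Proof. by case: subP => _ _ PM _; apply: PM. Qed.

Lemma subgroupV f g : P f -> cancel f g -> cancel g f -> P g.
Proof. by case: subP => _ _ _ PV; apply: PV. Qed.

Lemma subgroup_eqfun f g : P f -> f =1 g -> P g.
Proof.
move=> Pf fg; case: subP => Psym _ _ _.
have [f' fK f'K] := Psym f Pf.
have Pf' := subgroupV Pf fK f'K.
by apply: (subgroupV Pf') => x; rewrite -fg ?f'K ?fK.
Qed.

Lemma subgroupX k f : P f -> P (iter k f).
Proof.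
move=> Pf; elim: k => [|k IHk]; first exact: subgroup1.
by apply: subgroup_eqfun (subgroupM Pf IHk) _ => x.
Qed.

Lemma subgroupJ h h' f :
  P h -> cancel h h' -> cancel h' h -> P f -> P (h \o f \o h').
Proof. by move=> Ph hK h'K Pf; apply: subgroupM (subgroupM Ph Pf) (subgroupV Ph hK h'K). Qed.

End Subgroup.

Lemma gen_base n (S : (X n -> X n) -> Prop) s : S s -> gen S s.
Proof. by move=> Ss P _; apply. Qed.

Lemma gen_subset n (S T : (X n -> X n) -> Prop) :
  (forall s, S s -> gen T s) -> forall f, gen S f -> gen T f.
Proof. by move=> ST f Sf P subP PT; apply: (Sf P subP) => s /ST; apply. Qed.

Lemma iter_cancel (T : Type) (f g : T -> T) k : cancel f g -> cancel (iter k f) (iter k g).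
Proof. by move=> fK; elim: k => [|k IHk] x //; rewrite iterSr iterS fK IHk. Qed.

Definition swap (T : eqType) (x y z : T) : T :=
  if z == x then y else if z == y then x else z.

Section Swap.
Variable T : eqType.
Implicit Types x y z : T.

Lemma swapL x y : swap x y x = y.
Proof. by rewrite /swap eqxx. Qed.

Lemma swapR x y : swap x y y = x.
Proof. by rewrite /swap eqxx; case: eqP => // ->. Qed.

Lemma swapD x y z : z != x -> z != y -> swap x y z = z.
Proof. by rewrite /swap => /negbTE -> /negbTE ->. Qed.

Lemma swapK x y : cancel (swap x y) (swap x y).
Proof.
move=> z; have [->|zx] := eqVneq z x; first by rewrite swapL swapR.
have [->|zy] := eqVneq z y; first by rewrite swapR swapL.
by rewrite !swapD.
Qed.

Lemma swapC x y : swap x y =1 swap y x.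
Proof. by move=> z; rewrite /swap; case: eqP => [->|_]; case: eqP => // ->. Qed.

Lemma swap1 x : swap x x =1 id.
Proof. by move=> z; rewrite /swap; case: eqP. Qed.

Lemma swapJ (h h' : T -> T) x y :
  cancel h h' -> cancel h' h -> h \o swap x y \o h' =1 swap (h x) (h y).
Proof.
move=> hK h'K z /=.
have h'E a : (h' z == a) = (z == h a) by apply/eqP/eqP => [<-|->].
by rewrite /swap !h'E; do 2 case: ifP => //; rewrite h'K.
Qed.

End Swap.

Section SwapsInSubgroup.
Variables (n : nat) (P : (X n -> X n) -> Prop).
Hypothesis subP : is_subgroup P.

Lemma subgroup_swapJ h h' x y :
  P h -> cancel h h' -> cancel h' h -> P (swap x y) -> P (swap (h x) (h y)).
Proof.
move=> Ph hK h'K Pxy.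
exact: (subgroup_eqfun subP (subgroupJ subP Ph hK h'K Pxy) (swapJ _ _ hK h'K)).
Qed.

Lemma subgroup_swap_trans p y y' :
  y' != p -> y' != y -> P (swap p y) -> P (swap y y') -> P (swap p y').
Proof.
move=> y'p y'y Ppy Pyy'.
by have := subgroup_swapJ Ppy (swapK p y) (swapK p y) Pyy'; rewrite swapR swapD.
Qed.

Lemma subgroup_swap_star p : (forall y, P (swap p y)) -> forall x y, P (swap x y).
Proof.
move=> Pp x y; have [->|yp] := eqVneq y p.
  exact: (subgroup_eqfun subP (Pp x) (swapC p x)).
have [->|yx] := eqVneq y x.
  by apply: (subgroup_eqfun subP (subgroup1 subP)) => z; rewrite swap1.
by have := subgroup_swapJ (Pp x) (swapK p x) (swapK p x) (Pp y); rewrite swapL swapD.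
Qed.

End SwapsInSubgroup.


Definition ord_1 {n} : 'I_n.+2 := lift ord0 ord0.
Definition ord_2 {n} : 'I_n.+3 := lift ord0 ord_1.

(* Gluing rays 0 and j at their origins gives a copy of Z, on which shift j
   is the unit translation towards ray j. *)
Definition shift n (j : 'I_n.+2) (x : X n.+2) : X n.+2 :=
  let: (i, m) := x in
  if i == ord0 then (if m is m'.+1 then (ord0, m') else (j, 0))
  else if i == j then (j, m.+1) else (i, m).

Definition unshift n (j : 'I_n.+2) (x : X n.+2) : X n.+2 :=
  let: (i, m) := x in
  if i == j then (if m is m'.+1 then (j, m') else (ord0, 0))
  else if i == ord0 then (ord0, m.+1) else (i, m).

Section Shift.
Variables (n : nat) (j : 'I_n.+2).
Hypothesis j0 : j != ord0.

Let j0' : (ord0 == j) = false. Proof. by rewrite eq_sym (negbTE j0). Qed.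

Lemma shiftK : cancel (shift j) (unshift j).
Proof.
move=> [i m]; rewrite /shift /unshift.
have [->|i0] := eqVneq i ord0; first by case: m => [|m]; rewrite ?eqxx ?j0'.
have [->|ij] := eqVneq i j; first by rewrite (negbTE j0) eqxx.
by rewrite (negbTE ij) (negbTE i0).
Qed.

Lemma unshiftK : cancel (unshift j) (shift j).
Proof.
move=> [i m]; rewrite /shift /unshift.
have [->|ij] := eqVneq i j; first by case: m => [|m]; rewrite ?eqxx ?(negbTE j0).
have [->|i0] := eqVneq i ord0; first by rewrite j0' eqxx.
by rewrite (negbTE i0) (negbTE ij).
Qed.

Lemma iter_shift0 k m : iter k (shift j) (ord0, m + k) = (ord0, m).
Proof. by elim: k m => [|k IHk] m; rewrite ?addn0 // iterS addnS -addSn IHk /= ?eqxx. Qed.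

Lemma iter_shiftj k m : iter k (shift j) (j, m) = (j, m + k).
Proof. by elim: k => [|k IHk]; rewrite ?addn0 // iterS IHk /= (negbTE j0) eqxx addnS. Qed.

Lemma iter_unshift0 k m : iter k (unshift j) (ord0, m) = (ord0, m + k).
Proof. by elim: k => [|k IHk]; rewrite ?addn0 // iterS IHk /= j0' ?eqxx addnS. Qed.

Lemma iter_unshiftj k m : iter k (unshift j) (j, m + k) = (j, m).
Proof. by elim: k m => [|k IHk] m; rewrite ?addn0 // iterS addnS -addSn IHk /= ?eqxx. Qed.

Lemma iter_shift_other i k m :
  i != ord0 -> i != j -> iter k (shift j) (i, m) = (i, m).
Proof. by move=> /negbTE i0 /negbTE ij; elim: k => //= k ->; rewrite /= i0 ij. Qed.

Lemma iter_unshift_other i k m :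
  i != ord0 -> i != j -> iter k (unshift j) (i, m) = (i, m).
Proof. by move=> /negbTE i0 /negbTE ij; elim: k => //= k ->; rewrite /= i0 ij. Qed.

End Shift.

Definition eventually_translates n (g : X n -> X n) (z : 'I_n -> nat) (t : 'I_n -> int) :=
  forall (i : 'I_n) (m : nat), z i <= m ->
    (g (i, m)).1 = i /\ ((g (i, m)).2 : int) = (m%:Z + t i)%R.

Lemma eventually_translatesE n (g : X n -> X n) z t i m (b : nat) :
  eventually_translates g z t -> z i <= m -> (b%:Z = m%:Z + t i)%R -> g (i, m) = (i, b).
Proof.
by move=> gt /gt[g1 + eb]; rewrite -eb => -[g2]; rewrite [g _]surjective_pairing g1 g2.
Qed.

Lemma eventually_translates_comp n (g h : X n -> X n) z w t s :
  eventually_translates g z t -> eventually_translates h w s ->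
  eventually_translates (h \o g) (fun i => z i + w i + `|t i|%N) (fun i => t i + s i)%R.
Proof.
move=> gt hs i m le_m.
have [g1 g2] := gt i m (leq_trans (leq_addr _ _) (leq_trans (leq_addr _ _) le_m)).
have le_w : w i <= (g (i, m)).2 by lia.
have [h1 h2] := hs i _ le_w.
by rewrite /= [g (i, m)]surjective_pairing g1 h1 h2 g2 addrA.
Qed.

Definition shiftz n (j : 'I_n.+2) (k : int) : X n.+2 -> X n.+2 :=
  match k with Posz a => iter a (shift j) | Negz a => iter a.+1 (unshift j) end.

Section Shiftz.
Variables (n : nat) (j : 'I_n.+2).
Hypothesis j0 : j != ord0.

Lemma shiftzK k : cancel (shiftz j k) (shiftz j (- k)).
Proof.
case: k => [[|a]|a] //=; [exact: iter_cancel (shiftK j0) | exact: iter_cancel (unshiftK j0)].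
Qed.

Lemma shiftz_bij k : bijective (shiftz j k).
Proof. by exists (shiftz j (- k)) => x; rewrite ?shiftzK // -{1}(opprK k) shiftzK. Qed.

Lemma eventually_translates_shiftz k :
  eventually_translates (shiftz j k) (fun=> `|k|%N)
    (fun i => if i == j then k else if i == ord0 then - k else 0)%R.
Proof.
move=> i m /= le_m; have [->|ij] := eqVneq i j.
  case: k le_m => a /= le_m; first by rewrite iter_shiftj //; split=> //=; lia.
  by rewrite -(subnK le_m) -iterS iter_unshiftj; split=> //=; rewrite NegzE; lia.
have [->|i0] := eqVneq i ord0.
  case: k le_m => a /= le_m; first by rewrite -(subnK le_m) iter_shift0; split=> //=; lia.
  by rewrite -iterS iter_unshift0 //; split=> //=; rewrite NegzE; lia.
case: k le_m => a _ /=; last rewrite -iterS iter_unshift_other //.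
  by rewrite iter_shift_other // addr0.
by rewrite addr0.
Qed.

Lemma subgroup_shiftz (P : (X n.+2 -> X n.+2) -> Prop) k :
  is_subgroup P -> P (shift j) -> P (shiftz j k).
Proof.
move=> subP Pj; case: k => a /=; apply: subgroupX => //.
exact: subgroupV Pj (shiftK j0) (unshiftK j0).
Qed.

End Shiftz.

Definition low_points n (Z : nat) : seq (X n) :=
  [seq (i, m) | i <- enum 'I_n, m <- iota 0 Z].

Lemma mem_low_points n Z (x : X n) : (x \in low_points n Z) = (x.2 < Z).
Proof.
case: x => i m /=; apply/allpairsP/idP => [[[i' m'] /= [_ ]]|mZ].
  by rewrite mem_iota add0n => mZ [_ ->].
by exists (i, m); rewrite mem_enum mem_iota add0n mZ.
Qed.

Lemma low_points_uniq n Z : uniq (low_points n Z).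
Proof. by apply: allpairs_uniq; rewrite ?enum_uniq ?iota_uniq // => -[a b] [c d]. Qed.

Lemma size_low_points n Z : size (low_points n Z) = n * Z.
Proof. by rewrite size_allpairs size_enum_ord size_iota. Qed.

Lemma count_lt_subpred (T : eqType) (a b : pred T) (s : seq T) x :
  subpred a b -> x \in s -> b x -> ~~ a x -> count a s < count b s.
Proof.
move=> sub_ab; elim: s => //= y s IHs; rewrite inE => /orP[/eqP <-|xs] bx ax.
  by rewrite (negbTE ax) bx add0n add1n ltnS; apply: sub_count.
rewrite -addnS; apply: leq_add; last exact: IHs.
by case ay: (a y) => //; rewrite (sub_ab y ay).
Qed.

Section Finitary.
Variables (n : nat) (P : (X n -> X n) -> Prop).
Hypotheses (subP : is_subgroup P) (Pswap : forall x y, P (swap x y)).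

Lemma subgroup_finitary Z g :
  bijective g -> (forall x, Z <= x.2 -> g x = x) -> P g.
Proof.
pose moved (g : X n -> X n) := count (fun x => g x != x) (low_points n Z).
have [k] := ubnP (moved g); elim: k g => // k IHk g lt_k bg fixg.
have [/hasP[x] | /hasPn fixL] := boolP (has (fun x => g x != x) (low_points n Z)); last first.
  apply: (subgroup_eqfun subP (subgroup1 subP)) => x /=; apply/esym.
  have [xZ|] := ltnP x.2 Z; last exact: fixg.
  by apply/eqP; rewrite -[_ == _]negbK fixL // mem_low_points.
rewrite mem_low_points => xZ gx.
have ginj := bij_inj bg.
have gxZ : (g x).2 < Z.
  by rewrite ltnNge; apply/negP => /fixg /ginj gxx; rewrite gxx eqxx in gx.
pose g' := swap x (g x) \o g.
have moved_g' y : g y = y -> g' y = y.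
  move=> gy; rewrite /g' /= gy swapD //; apply/eqP => yE.
    by rewrite -yE gy eqxx in gx.
  by move/ginj: (etrans gy yE) => yx; rewrite -yx gy eqxx in gx.
have Pg' : P g'.
  apply: IHk.
  - rewrite -ltnS; apply: leq_trans lt_k.
    apply: (@count_lt_subpred _ _ _ _ x); rewrite ?mem_low_points //.
      by move=> y; apply: contraNN => /eqP /moved_g' ->.
    by rewrite /g' /= swapR eqxx.
  - by apply: bij_comp => //; exists (swap x (g x)); apply: swapK.
  - by move=> y yZ; rewrite moved_g' ?fixg.
apply: (subgroup_eqfun subP (subgroupM subP (Pswap x (g x)) Pg')) => y.
exact: swapK.
Qed.

End Finitary.

(* Pigeonhole below level K := Z + d: the images of the low points stay low,
   and so do the images of the d points (ord0, K + i), i < d. *)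
Lemma not_injective_ray_compression n (g : X n.+1 -> X n.+1) Z d :
  injective g -> 0 < d ->
  (forall m, Z <= m -> g (ord0, m + d) = (ord0, m)) ->
  (forall j m, j != ord0 -> Z <= m -> g (j, m) = (j, m)) -> False.
Proof.
move=> ginj d_gt0 g0 gj; pose K := Z + d.
pose top := [seq (ord0, Z + i) | i <- iota 0 d] : seq (X n.+1).
have gL x : x \in low_points n.+1 K -> g x \in low_points n.+1 K.
  rewrite !mem_low_points => xK; rewrite ltnNge; apply/negP.
  case E: (g x) => [i M] /= KM; have ZM : Z <= M by lia.
  have [i0|i0] := eqVneq i ord0.
    have /ginj ex : g (ord0, M + d) = g x by rewrite E g0 // i0.
    by move: xK; rewrite -ex /= /K; lia.
  have /ginj ex : g (i, M) = g x by rewrite E gj.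
  by move: xK; rewrite -ex /= /K; lia.
have U : uniq (map g (low_points n.+1 K) ++ top).
  rewrite cat_uniq (map_inj_uniq ginj) low_points_uniq /=; apply/andP; split.
    apply/hasPn => y /mapP[i]; rewrite mem_iota add0n => lt_id ->.
    apply/mapP => -[x xL]; rewrite -g0 ?leq_addr // => /ginj ex.
    by move: xL; rewrite mem_low_points -ex /= /K; lia.
  by rewrite map_inj_uniq ?iota_uniq // => a b [] /addnI.
have S : {subset map g (low_points n.+1 K) ++ top <= low_points n.+1 K}.
  move=> y; rewrite mem_cat => /orP[/mapP[x xL ->]|]; first exact: gL.
  move=> /mapP[i]; rewrite mem_iota mem_low_points => /andP[_ lt_id] -> /=.
  by rewrite /K; lia.
by have := uniq_leq_size U S; rewrite size_cat !size_map size_iota size_low_points; lia.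
Qed.

Lemma eventually_translates_max n (g : X n -> X n) z t :
  eventually_translates g z t -> eventually_translates g (fun=> \max_i z i) t.
Proof. by move=> gt i m /(leq_trans (leq_bigmax i)); apply: gt. Qed.

Lemma translation_ray0_eq0 n (g : X n.+1 -> X n.+1) Z t :
  bijective g -> eventually_translates g (fun=> Z) t ->
  (forall j, j != ord0 -> t j = 0%R) -> t ord0 = 0%R.
Proof.
move=> [g' gK g'K] gt tj.
have gj j m : j != ord0 -> Z <= m -> g (j, m) = (j, m).
  by move=> j0 Zm; apply: (eventually_translatesE gt Zm); rewrite tj ?addr0.
case E0: (t ord0) => [[|d]|d] //; exfalso.
- apply: (not_injective_ray_compression (g := g') (Z := Z) (d := d.+1) (can_inj g'K)) => //.
    move=> m Zm; apply: (can_inj gK); rewrite g'K; apply/esym.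
    by apply: (eventually_translatesE gt Zm); rewrite E0; lia.
  by move=> j m j0 Zm; apply: (can_inj gK); rewrite g'K gj.
- apply: (not_injective_ray_compression (g := g) (Z := Z) (d := d.+1) (can_inj gK)) => //.
  move=> m Zm; apply: (eventually_translatesE gt (leq_trans Zm (leq_addr _ _))).
  by rewrite E0 NegzE; lia.
Qed.

Section TranslationsInSubgroup.
Variables (n : nat) (P : (X n.+2 -> X n.+2) -> Prop).
Hypotheses (subP : is_subgroup P) (Pswap : forall x y, P (swap x y)).
Hypothesis Pshift : forall j, j != ord0 -> P (shift j).

Lemma subgroup_translations_off_ray0 g z t :
  bijective g -> eventually_translates g z t ->
  (forall j, j != ord0 -> t j = 0%R) -> P g.
Proof.
move=> bg /eventually_translates_max gt tj.
have t0 := translation_ray0_eq0 bg gt tj.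
apply: (subgroup_finitary subP Pswap bg (Z := \max_i z i)) => -[i m] /= Zm.
apply: (eventually_translatesE gt Zm).
by have [->|i0] := eqVneq i ord0; rewrite ?t0 ?tj ?addr0.
Qed.

Lemma subgroup_in_H g : in_H g -> P g.
Proof.
case=> bg [z [t gt]].
suff PH (s : seq 'I_n.+2) g' z' t' : bijective g' -> eventually_translates g' z' t' ->
    (forall j, j \notin s -> j != ord0 -> t' j = 0%R) -> P g'.
  by apply: (PH (enum 'I_n.+2) g z t) => // j; rewrite mem_enum.
elim: s g' z' t' => [|j s IHs] g' z' t' bg' gt' ts.
  by apply: (subgroup_translations_off_ray0 bg' gt') => j; apply: ts.
have [j0|j0] := eqVneq j ord0.
  by apply: (IHs _ _ _ bg' gt') => i si i0; rewrite ts // inE negb_or si andbT j0.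
have Pg'' : P (shiftz j (- t' j)%R \o g').
  have gt'' := eventually_translates_comp gt' (eventually_translates_shiftz j0 (k := - t' j)).
  apply: (IHs _ _ _ (bij_comp (shiftz_bij j0 _) bg') gt'') => i si i0 /=.
  have [->|ij] := eqVneq i j; first by rewrite addrN.
  by rewrite (negbTE i0) addr0 ts // inE negb_or ij.
have Pj := subgroup_shiftz j0 (t' j) subP (Pshift j0).
apply: (subgroup_eqfun subP (subgroupM subP Pj Pg'')).
by move=> x /=; rewrite -{1}(opprK (t' j)) shiftzK.
Qed.

End TranslationsInSubgroup.

Lemma perm_actK n (s : 'S_n) : cancel (perm_act s) (perm_act s^-1%g).
Proof. by move=> [i m]; rewrite /perm_act /= permK. Qed.

Lemma perm_actKV n (s : 'S_n) : cancel (perm_act s^-1%g) (perm_act s).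
Proof. by move=> [i m]; rewrite /perm_act /= permKV. Qed.

Section SwapsFromShifts.
Variables (n : nat) (P : (X n.+2 -> X n.+2) -> Prop).
Hypotheses (subP : is_subgroup P) (Pperm : forall s, P (perm_act s)).
Hypothesis Pshift : forall j, j != ord0 -> P (shift j).
Hypothesis Pswap01 : P (swap (ord0, 0) (ord_1, 0)).

Lemma subgroup_swap_origin j : j != ord0 -> P (swap (ord0, 0) (j, 0)).
Proof.
move=> j0.
have := subgroup_swapJ subP (Pperm (tperm ord_1 j)) (perm_actK _) (perm_actKV _) Pswap01.
by rewrite /perm_act /= tpermL tpermD // eq_sym.
Qed.

Lemma subgroup_swap_step i m : P (swap (i, m) (i, m.+1)).
Proof.
have [-> | i0] := eqVneq i ord0.
  have o10 : ord_1 != ord0 :> 'I_n.+2 by [].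
  have Pu := subgroupV subP (Pshift o10) (shiftK o10) (unshiftK o10).
  have := subgroup_swapJ subP (subgroupX subP m.+1 Pu)
    (iter_cancel m.+1 (unshiftK o10)) (iter_cancel m.+1 (shiftK o10)) Pswap01.
  rewrite iter_unshift0 // iterSr /= iter_unshift0 // => Pswap.
  exact: (subgroup_eqfun subP Pswap (swapC _ _)).
have := subgroup_swapJ subP (subgroupX subP m.+1 (Pshift i0))
  (iter_cancel m.+1 (shiftK i0)) (iter_cancel m.+1 (unshiftK i0)) (subgroup_swap_origin i0).
by rewrite (iter_shiftj i0) iterSr /= iter_shiftj // !add0n.
Qed.

Lemma subgroup_swap_from_origin y : P (swap (ord0, 0) y).
Proof.
case: y => i m; elim: m => [|m IHm].
  have [-> | i0] := eqVneq i ord0; last exact: subgroup_swap_origin.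
  by apply: (subgroup_eqfun subP (subgroup1 subP)) => z; rewrite swap1.
apply: (subgroup_swap_trans subP _ _ IHm (subgroup_swap_step i m)).
  by rewrite xpair_eqE andbF.
by rewrite xpair_eqE eqxx gtn_eqF.
Qed.

Lemma subgroup_swap x y : P (swap x y).
Proof. exact: (subgroup_swap_star subP subgroup_swap_from_origin). Qed.

End SwapsFromShifts.

Definition ordS_perm n : 'S_n.+2 := perm (@ordS_inj n.+2).

Lemma ordS_permE n k : k.+1 < n.+2 -> ordS_perm n (inord k) = inord k.+1.
Proof. by move=> lt_k; apply/val_inj; rewrite permE /= !inordK ?modn_small //; lia. Qed.

Lemma ordS_perm2 : ordS_perm 0 = tperm ord0 ord_1.
Proof.
apply/permP => -[[|[|k]] lt_k] //; rewrite permE; apply/val_inj.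
  by rewrite (_ : Ordinal lt_k = ord0) ?tpermL //; apply/val_inj.
by rewrite (_ : Ordinal lt_k = ord_1) ?tpermR //; apply/val_inj.
Qed.

Section PermGeneration.
Variables (n : nat) (Q : 'S_n.+2 -> Prop).
Hypotheses (Q1 : Q 1%g) (QM : forall s t, Q s -> Q t -> Q (s * t)%g).
Hypothesis QV : forall s, Q s -> Q s^-1%g.
Hypotheses (Q01 : Q (tperm ord0 ord_1)) (Qrot : Q (ordS_perm n)).

Let QJ s t : Q s -> Q t -> Q (s ^ t)%g.
Proof. by move=> Qs Qt; rewrite conjgE; apply: QM (QV Qt) (QM Qs Qt). Qed.

Lemma generated_tperm_succ k : k.+1 < n.+2 -> Q (tperm (inord k) (inord k.+1)).
Proof.
elim: k => [|k IHk] lt_k.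
  have -> : inord 0 = ord0 :> 'I_n.+2 by apply/val_inj; rewrite /= inordK.
  by have -> : inord 1 = ord_1 :> 'I_n.+2 by apply/val_inj; rewrite /= inordK.
by have := QJ (IHk (ltnW lt_k)) Qrot; rewrite tpermJ !ordS_permE //; lia.
Qed.

Lemma generated_tperm0 j : Q (tperm ord0 j).
Proof.
suff Q0 k : 0 < k < n.+2 -> Q (tperm ord0 (inord k)).
  have [->|j0] := eqVneq j ord0; first by rewrite tperm1.
  by rewrite -(inord_val j); apply: Q0; rewrite ltn_ord andbT lt0n.
elim: k => [|k IHk] // /andP[_ lt_k].
have i0E : inord 0 = ord0 :> 'I_n.+2 by apply/val_inj; rewrite /= inordK.
case: k IHk lt_k => [|k] IHk lt_k; first by rewrite -{1}i0E; apply: generated_tperm_succ.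
have := QJ (IHk (ltac:(lia))) (generated_tperm_succ lt_k).
by rewrite tpermJ tpermL tpermD // -(inj_eq val_inj) /= inordK //; lia.
Qed.

Lemma generated_perm s : Q s.
Proof.
have Qt i j : Q (tperm i j).
  have [->|i0] := eqVneq i ord0; first exact: generated_tperm0.
  have [->|j0] := eqVneq j ord0; first by rewrite tpermC; apply: generated_tperm0.
  have [->|ij] := eqVneq i j; first by rewrite tperm1.
  have := QJ (generated_tperm0 j) (generated_tperm0 i).
  by rewrite tpermJ tpermL tpermD // eq_sym.
have [ts -> _] := prod_tpermP s; elim: ts => [|t ts IHts]; first by rewrite big_nil.
by rewrite big_cons; apply: QM.
Qed.

End PermGeneration.

Lemma subgroup_perm_act n (P : (X n.+2 -> X n.+2) -> Prop) :
  is_subgroup P -> P (perm_act (tperm ord0 ord_1)) -> P (perm_act (ordS_perm n)) ->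
  forall s, P (perm_act s).
Proof.
move=> subP P01 Prot; apply: generated_perm => //.
- by apply: (subgroup_eqfun subP (subgroup1 subP)) => -[i m]; rewrite /perm_act /= perm1.
- move=> s t Ps Pt; apply: (subgroup_eqfun subP (subgroupM subP Pt Ps)) => -[i m].
  by rewrite /perm_act /= permM.
- by move=> s Ps; apply: (subgroupV subP Ps (perm_actK s) (perm_actKV s)).
Qed.

Lemma perm_act_shiftJ n (s : 'S_n.+2) j : s ord0 = ord0 ->
  perm_act s \o shift j \o perm_act s^-1%g =1 shift (s j).
Proof.
move=> s0 [i m]; rewrite /perm_act /=.
have s'E a : ((s^-1)%g i == a) = (i == s a).
  by apply/eqP/eqP => [<-|->]; rewrite ?permK ?permKV.
rewrite !s'E s0; case: (i == ord0); first by case: m => [|m] /=; rewrite ?s0.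
by case: (i == s j) => //=; rewrite permKV.
Qed.

Lemma subgroup_shift n (P : (X n.+2 -> X n.+2) -> Prop) :
  is_subgroup P -> (forall s, P (perm_act s)) -> P (shift ord_1) ->
  forall j, j != ord0 -> P (shift j).
Proof.
move=> subP Pperm P1 j j0.
have s0 : tperm ord_1 j ord0 = ord0 by rewrite tpermD // eq_sym.
have := subgroupJ subP (Pperm (tperm ord_1 j)) (perm_actK _) (perm_actKV _) P1.
by move/(subgroup_eqfun subP); apply => x; rewrite perm_act_shiftJ // tpermL.
Qed.

Lemma shift_commutator n :
  shift ord_2 \o shift ord_1 \o unshift ord_2 \o unshift ord_1
  =1 swap ((ord_1 : 'I_n.+3), 0) (ord_2, 0).
Proof.
move=> [[[|[|[|k]]] lt_k] [|m]] //=; rewrite /swap /=; congr pair; exact/val_inj.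
Qed.

Lemma subgroup_swap01 n (P : (X n.+3 -> X n.+3) -> Prop) :
  is_subgroup P -> (forall s, P (perm_act s)) -> P (shift ord_1) ->
  P (swap (ord0, 0) (ord_1, 0)).
Proof.
move=> subP Pperm P1; have Pshift := subgroup_shift subP Pperm P1.
have Punshift j : j != ord0 -> P (unshift j).
  by move=> j0; apply: (subgroupV subP (Pshift j j0) (shiftK j0) (unshiftK j0)).
have P12 : P (swap (ord_1, 0) (ord_2, 0)).
  apply: (subgroup_eqfun subP _ (@shift_commutator n)).
  apply: (subgroupM subP (subgroupM subP (subgroupM subP (Pshift ord_2 isT) (Pshift ord_1 isT))
    (Punshift ord_2 isT)) (Punshift ord_1 isT)).
have := subgroup_swapJ subP (Pperm (tperm ord_2 ord0)) (perm_actK _) (perm_actKV _) P12.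
rewrite /perm_act /= tpermD // tpermL => P10.
exact: (subgroup_eqfun subP P10 (swapC _ _)).
Qed.

Lemma shift_in_H n (j : 'I_n.+2) : j != ord0 -> in_H (shift j).
Proof.
move=> j0; split; first by exists (unshift j); [apply: shiftK | apply: unshiftK].
by do 2 eexists; apply: (eventually_translates_shiftz j0 (k := 1%R)).
Qed.

Lemma swap_in_H n (x y : X n) : in_H (swap x y).
Proof.
split; first by exists (swap x y); apply: swapK.
exists (fun=> (maxn x.2 y.2).+1), (fun=> 0%R) => i m lt_m.
rewrite swapD ?addr0 //; apply/eqP => /(congr1 snd) /= mE; move: lt_m; rewrite mE; lia.
Qed.

Lemma subgroup_HS n (P : (X n.+2 -> X n.+2) -> Prop) :
  is_subgroup P -> (forall s, P (perm_act s)) -> P (shift ord_1) ->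
  P (swap (ord0, 0) (ord_1, 0)) ->
  forall f, in_H f \/ (exists s : 'S_n.+2, f = perm_act s) -> P f.
Proof.
move=> subP Pperm P1 P01 f [Hf | [s ->]]; last exact: Pperm.
have Pshift := subgroup_shift subP Pperm P1.
exact: subgroup_in_H subP (subgroup_swap subP Pperm Pshift P01) Pshift f Hf.
Qed.

Lemma gen_eq_HS n (S : (X n.+2 -> X n.+2) -> Prop) :
  (forall s, S s -> in_H s \/ exists p : 'S_n.+2, s = perm_act p) ->
  (forall P, is_subgroup P -> (forall s, S s -> P s) ->
     [/\ P (shift ord_1), P (swap (ord0, 0) (ord_1, 0)) & forall p, P (perm_act p)]) ->
  forall f, gen S f <-> HS f.
Proof.
move=> SH genS f; split; apply: gen_subset => s; first by move/SH; apply: gen_base.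
move=> Hs P subP PS; have [P1 P01 Pperm] := genS P subP PS.
exact: subgroup_HS subP Pperm P1 P01 s Hs.
Qed.

Theorem lemma3p1 (n : nat) : 2 <= n ->
  exists a b c : X n -> X n,
    forall f : X n -> X n,
      gen (fun s => s = a \/ s = b \/ s = c) f <-> HS f.
Proof.
case: n => [|[|n]] // _; case: n => [|n].
  exists (shift ord_1), (swap (ord0, 0) (ord_1, 0)), (perm_act (tperm ord0 ord_1)).
  apply: gen_eq_HS => [s [->|[->|->]] | P subP PS].
  - by left; apply: shift_in_H.
  - by left; apply: swap_in_H.
  - by right; exists (tperm ord0 ord_1).
  split; [apply: PS; tauto.. |].
  by apply: (subgroup_perm_act subP); rewrite ?ordS_perm2; apply: PS; tauto.
exists (shift ord_1), (perm_act (tperm ord0 ord_1)), (perm_act (ordS_perm n.+1)).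
apply: gen_eq_HS => [s [->|[->|->]] | P subP PS].
- by left; apply: shift_in_H.
- by right; exists (tperm ord0 ord_1).
- by right; exists (ordS_perm n.+1).
have P1 : P (shift ord_1) by apply: PS; tauto.
have Pperm : forall p, P (perm_act p) by apply: (subgroup_perm_act subP); apply: PS; tauto.
by split=> //; apply: subgroup_swap01.
Qed.
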